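(* Let $q$ be a prime power, $n=q^2-1$, and let $x\in\{1,\ldots,n-1\}$ be the minimal representative of its cyclotomic coset $I_x$, with $q$-adic representation $x=a_0+a_1q$, $0\le a_0,a_1<q$. Then $I_x$ is a symmetric coset if and only if $a_0+a_1=q-1$, and $I_x$ is an SR-asymmetric coset if and only if $a_0+a_1>q-1$.
   Context: Identify $\mathbb{Z}_n$ with $\{0,\ldots,n-1\}$. The cyclotomic coset of $x$ with respect to $q$ is $I_x=\{x,\,xq\bmod n\}$; its minimal representative is its least element. The (Euclidean) reciprocal coset of $I_x$ is $I_{n-x}$. $I_x$ is symmetric if $I_{n-x}=I_x$, and asymmetric otherwise. If $I_x$ is asymmetric with reciprocal coset $I_y$, where $x,y$ are the minimal representatives and $x<y$, then $I_x$ is the FR-asymmetric coset and $I_y$ the SR-asymmetric coset of the pair. *)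

From mathcomp Require Import all_boot.
Set Implicit Arguments. Unset Strict Implicit. Unset Printing Implicit Defensive.

Definition prime_power (q : nat) : Prop := exists p k, prime p /\ 0 < k /\ q = p ^ k.

(* Z_n identified with {0,...,n-1}; the cyclotomic coset I_x = {x, x q mod n}. *)
Definition coset (n q x : nat) : seq nat := [:: x %% n; (x * q) %% n].

Definition minrep (n q x : nat) : nat := minn (x %% n) ((x * q) %% n).

(* the reciprocal coset of I_x is I_{n-x} *)
Definition symmetric_coset (n q x : nat) : Prop :=
  coset n q (n - x) =i coset n q x.

Definition asymmetric_coset (n q x : nat) : Prop := ~ symmetric_coset n q x.

Definition SR_asymmetric_coset (n q x : nat) : Prop :=
  asymmetric_coset n q x /\ minrep n q (n - x) < minrep n q x.

(** Write [x = a0 + a1 q] in base [q] and [n = q^2 - 1].  Since [q^2 = 1] modulo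
    [n], multiplying by [q] swaps the two digits, so [I_x = {a0 + a1 q, a1 + a0 q}],
    while [n - x] has the complemented digits [q-1-a0] and [q-1-a1].  Comparing
    numbers with digits lexicographically, [I_{n-x} = I_x] forces
    [q-1-a0 = a1], and for a minimal representative ([a1 <= a0]) the minimal
    representative [(q-1-a1) + (q-1-a0) q] of [I_{n-x}] is below [x] exactly
    when [q-1-a0 < a1]. *)

From mathcomp Require Import all_boot zify.

Set Implicit Arguments.
Unset Strict Implicit.
Unset Printing Implicit Defensive.

Lemma prime_power_gt1 q : prime_power q -> 1 < q.
Proof.
by move=> [p [k [p_prime [k_gt0 ->]]]]; rewrite -{1}(expn0 p) ltn_exp2l ?prime_gt1.
Qed.

Section BaseDigits.

Variable q : nat.

Lemma digitsK c0 c1 : c0 < q ->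
  ((c0 + c1 * q) %/ q = c1) * ((c0 + c1 * q) %% q = c0).
Proof.
move=> c0q; have q_gt0 : 0 < q by apply: leq_ltn_trans c0q.
by rewrite addnC divnMDl // modnMDl divn_small ?modn_small ?addn0.
Qed.

Lemma eqn_digits c0 c1 d0 d1 : c0 < q -> d0 < q ->
  (c0 + c1 * q == d0 + d1 * q) = (c0 == d0) && (c1 == d1).
Proof.
move=> c0q d0q; apply/eqP/andP => [E|[/eqP-> /eqP->]] //.
have := congr1 (modn^~ q) E; have := congr1 (divn^~ q) E.
by rewrite /= !digitsK // => -> ->.
Qed.

Lemma ltn_digits_hi c0 c1 d0 d1 : c0 < q -> c1 < d1 ->
  c0 + c1 * q < d0 + d1 * q.
Proof.
move=> c0q lt_c1d1; have : c1.+1 * q <= d1 * q by rewrite leq_mul2r lt_c1d1 orbT.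
lia.
Qed.

Lemma ltn_digits c0 c1 d0 d1 : c0 < q -> d0 < q ->
  (c0 + c1 * q < d0 + d1 * q) = (c1 < d1) || (c1 == d1) && (c0 < d0).
Proof.
move=> c0q d0q; case: (ltngtP c1 d1) => [lt_c1d1|lt_d1c1|->] /=.
- exact: ltn_digits_hi.
- by apply/negbTE; rewrite -leqNgt ltnW // ltn_digits_hi.
- by rewrite ltn_add2r.
Qed.

Lemma minn_digits_swap c0 c1 : c0 < q -> c1 < q ->
  minn (c0 + c1 * q) (c1 + c0 * q) = maxn c0 c1 + minn c0 c1 * q.
Proof.
move=> c0q c1q; case: (leqP c1 c0) => [le_c1c0|lt_c0c1].
- apply/minn_idPl.
  by rewrite leqNgt ltn_digits //; lia.
- apply/minn_idPr.
  by rewrite ltnW // ltn_digits // lt_c0c1.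
Qed.

Hypothesis q_gt1 : 1 < q.

Local Notation n := (q ^ 2 - 1).

Lemma ltn_digits_n a0 a1 : a0 < q -> a1 < q ->
  (a0 + a1 * q < n) = (a0 + a1 < (q - 1).*2).
Proof. by move=> a0q a1q; rewrite expnS expn1; apply/idP/idP; nia. Qed.

Lemma subn_digits a0 a1 : a0 < q -> a1 < q ->
  n - (a0 + a1 * q) = (q - 1 - a0) + (q - 1 - a1) * q.
Proof. by move=> a0q a1q; rewrite expnS expn1; nia. Qed.

Lemma mulq_mod_digits a0 a1 : a0 < q -> a1 < q -> a0 + a1 < (q - 1).*2 ->
  (a0 + a1 * q) * q %% n = a1 + a0 * q.
Proof.
move=> a0q a1q small.
have -> : (a0 + a1 * q) * q = a1 * n + (a1 + a0 * q) by rewrite expnS expn1; nia.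
by rewrite modnMDl modn_small // ltn_digits_n // addnC.
Qed.

Lemma coset_digits a0 a1 : a0 < q -> a1 < q -> a0 + a1 * q < n ->
  coset n q (a0 + a1 * q) = [:: a0 + a1 * q; a1 + a0 * q].
Proof.
move=> a0q a1q x_lt_n; have small : a0 + a1 < (q - 1).*2 by rewrite -ltn_digits_n.
by rewrite /coset modn_small // mulq_mod_digits.
Qed.

Lemma minrep_digits a0 a1 : a0 < q -> a1 < q -> a0 + a1 * q < n ->
  minrep n q (a0 + a1 * q) = maxn a0 a1 + minn a0 a1 * q.
Proof.
move=> a0q a1q x_lt_n; have small : a0 + a1 < (q - 1).*2 by rewrite -ltn_digits_n.
by rewrite /minrep modn_small // mulq_mod_digits // minn_digits_swap.
Qed.

Lemma minrep_digits_id a0 a1 : a0 < q -> a1 < q -> a0 + a1 * q < n ->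
  (a0 + a1 * q == minrep n q (a0 + a1 * q)) = (a1 <= a0).
Proof.
move=> a0q a1q x_lt_n; rewrite minrep_digits // eqn_digits //; last lia.
apply/andP/idP; lia.
Qed.

Section Representative.

Variables a0 a1 : nat.
Hypotheses (a0q : a0 < q) (a1q : a1 < q) (x_range : 0 < a0 + a1 * q < n).

Let b0q : q - 1 - a0 < q. Proof. lia. Qed.
Let b1q : q - 1 - a1 < q. Proof. lia. Qed.
Let x_lt_n : a0 + a1 * q < n. Proof. by case/andP: x_range. Qed.
Let y_lt_n : (q - 1 - a0) + (q - 1 - a1) * q < n.
Proof. by rewrite -subn_digits // ltn_subrL; lia. Qed.

Lemma symmetric_coset_digits :
  symmetric_coset n q (a0 + a1 * q) <-> a0 + a1 = q - 1.
Proof.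
rewrite /symmetric_coset subn_digits // !coset_digits //.
split=> [sym|sum_a].
- have := sym ((q - 1 - a0) + (q - 1 - a1) * q).
  by rewrite !inE eqxx !eqn_digits //; lia.
- have -> : q - 1 - a0 = a1 by lia.
  have -> : q - 1 - a1 = a0 by lia.
  by move=> z; rewrite !inE orbC.
Qed.

Lemma SR_asymmetric_coset_digits : a1 <= a0 ->
  SR_asymmetric_coset n q (a0 + a1 * q) <-> q - 1 < a0 + a1.
Proof.
move=> le_a1a0; rewrite /SR_asymmetric_coset /asymmetric_coset.
rewrite symmetric_coset_digits subn_digits // !minrep_digits // ltn_digits; lia.
Qed.

End Representative.

End BaseDigits.

Theorem mainTheorem6 (q n x a0 a1 : nat) :
  prime_power q -> n = q ^ 2 - 1 ->
  0 < x < n -> x = minrep n q x ->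
  x = a0 + a1 * q -> a0 < q -> a1 < q ->
  (symmetric_coset n q x <-> a0 + a1 = q - 1) /\
  (SR_asymmetric_coset n q x <-> a0 + a1 > q - 1).
Proof.
move=> /prime_power_gt1 q_gt1 -> x_range x_min x_digits a0q a1q; subst x.
split; first exact: symmetric_coset_digits.
apply: SR_asymmetric_coset_digits => //.
have x_lt_n : a0 + a1 * q < q ^ 2 - 1 by case/andP: x_range.
by rewrite -(minrep_digits_id q_gt1 a0q a1q x_lt_n); apply/eqP.
Qed.
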